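(* Let $F\in\Gamma_0^s(\mathbb{R}_+)$ and $a\in(0,1)$. Suppose that $\hat F^a$ is a metric on $[0,+\infty)$ and that $T_a(F)=F$. Then there is $c\in(0,+\infty)$ such that $F(s)=c|s^a-1|^{1/a}$ for all $s\ge0$.
   Context: $\Gamma_0(\mathbb{R}_+)$ is the set of functions $F:[0,\infty)\to[0,\infty]$ that are convex, lower semicontinuous, with $F(1)=0$. For $F\in\Gamma_0(\mathbb{R}_+)$: $\mathrm{rec}(F)(r)=\lim_{\alpha\to\infty}F(1+\alpha r)/\alpha$, $F'_\infty:=\mathrm{rec}(F)(1)$; the perspective function is $\hat F(r,t)=tF(r/t)$ for $t>0$, $\hat F(r,0)=\mathrm{rec}(F)(r)$; the reverse entropy is $R(s)=sF(1/s)$ for $s>0$, $R(0)=F'_\infty$. $\Gamma_0^s(\mathbb{R}_+)$ is the set of $F\in\Gamma_0(\mathbb{R}_+)$ with $F=R$; for such $F$, $\hat F$ is symmetric and $\hat F(1,t)=F(t)$. The marginal perspective function $H_F$ is the lower semicontinuous envelope of $\tilde H_F(r_1,r_2)=\inf_{\theta>0}[\hat F(\theta,r_1)+\hat F(\theta,r_2)]$. For $a\in(0,1]$, $T_a(F)(s)=2^{1/a-1}H_F(1,s)$. A metric on $[0,\infty)$ is a finite-valued function $D:[0,\infty)^2\to[0,\infty)$ with $D(x,y)=0\iff x=y$, symmetric, satisfying the triangle inequality. *)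

From Stdlib Require Import Reals Lra ClassicalEpsilon.
Open Scope R_scope.

(* Extended reals (-oo is never needed): finite values and +oo. *)
Inductive ER : Type := Fin : R -> ER | PInf : ER.

Definition er_le (x y : ER) : Prop :=
  match x, y with
  | Fin a, Fin b => a <= b
  | _, PInf => True
  | PInf, Fin _ => False
  end.

Definition er_lt (x y : ER) : Prop :=
  match x, y with
  | Fin a, Fin b => a < b
  | Fin _, PInf => True
  | PInf, _ => False
  end.

Definition er_plus (x y : ER) : ER :=
  match x, y with
  | Fin a, Fin b => Fin (a + b)
  | _, _ => PInf
  end.

(* multiplication by a real scalar t > 0 (only used with t > 0) *)
Definition er_scale (t : R) (x : ER) : ER :=
  match x with
  | Fin a => Fin (t * a)
  | PInf => PInf
  end.

Definition rpow (x p : R) : R :=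
  if Req_EM_T x 0 then 0 else Rpower x p.

Definition er_pow (x : ER) (p : R) : ER :=
  match x with
  | Fin a => Fin (rpow a p)
  | PInf => PInf
  end.

Definition er_is_lub (S : ER -> Prop) (m : ER) : Prop :=
  (forall y, S y -> er_le y m) /\
  (forall b, (forall y, S y -> er_le y b) -> er_le m b).

Definition er_is_glb (S : ER -> Prop) (m : ER) : Prop :=
  (forall y, S y -> er_le m y) /\
  (forall b, (forall y, S y -> er_le b y) -> er_le b m).

Definition er_sup (S : ER -> Prop) : ER :=
  epsilon (inhabits PInf) (er_is_lub S).

Definition er_inf (S : ER -> Prop) : ER :=
  epsilon (inhabits PInf) (er_is_glb S).

Definition er_lim_pinf (g : R -> ER) (L : ER) : Prop :=
  match L with
  | Fin l => forall eps, 0 < eps -> exists M, forall al, M < al ->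
               exists v, g al = Fin v /\ Rabs (v - l) < eps
  | PInf => forall K, exists M, forall al, M < al -> er_lt (Fin K) (g al)
  end.

Definition nonneg_on (F : R -> ER) : Prop :=
  forall x, 0 <= x -> er_le (Fin 0) (F x).

Definition convex_on_Rplus (F : R -> ER) : Prop :=
  forall x y l, 0 <= x -> 0 <= y -> 0 < l < 1 ->
    er_le (F (l * x + (1 - l) * y))
          (er_plus (er_scale l (F x)) (er_scale (1 - l) (F y))).

Definition lsc_on_Rplus (F : R -> ER) : Prop :=
  forall x c, 0 <= x -> er_lt (Fin c) (F x) ->
    exists d, 0 < d /\ forall y, 0 <= y -> Rabs (y - x) < d -> er_lt (Fin c) (F y).

Definition Gamma0 (F : R -> ER) : Prop :=
  nonneg_on F /\ convex_on_Rplus F /\ lsc_on_Rplus F /\ F 1 = Fin 0.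

Definition recF (F : R -> ER) (r : R) : ER :=
  epsilon (inhabits PInf)
    (er_lim_pinf (fun al => er_scale (/ al) (F (1 + al * r)))).

Definition Finf (F : R -> ER) : ER := recF F 1.

Definition persp (F : R -> ER) (r t : R) : ER :=
  if Rlt_dec 0 t then er_scale t (F (r / t)) else recF F r.

Definition revF (F : R -> ER) (s : R) : ER :=
  if Rlt_dec 0 s then er_scale s (F (/ s)) else Finf F.

Definition Gamma0s (F : R -> ER) : Prop :=
  Gamma0 F /\ forall s, 0 <= s -> F s = revF F s.

Definition tildeH (F : R -> ER) (r1 r2 : R) : ER :=
  er_inf (fun v => exists th, 0 < th /\ v = er_plus (persp F th r1) (persp F th r2)).

Definition lsc2_on (G : R -> R -> ER) : Prop :=
  forall x1 x2 c, 0 <= x1 -> 0 <= x2 -> er_lt (Fin c) (G x1 x2) ->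
    exists d, 0 < d /\ forall y1 y2, 0 <= y1 -> 0 <= y2 ->
      Rabs (y1 - x1) < d -> Rabs (y2 - x2) < d -> er_lt (Fin c) (G y1 y2).

Definition lsc_env (G : R -> R -> ER) (x1 x2 : R) : ER :=
  er_sup (fun v => exists g : R -> R -> ER, lsc2_on g /\
            (forall y1 y2, 0 <= y1 -> 0 <= y2 -> er_le (g y1 y2) (G y1 y2)) /\
            v = g x1 x2).

Definition HF (F : R -> ER) : R -> R -> ER := lsc_env (tildeH F).

Definition Ta (a : R) (F : R -> ER) (s : R) : ER :=
  er_scale (Rpower 2 (/ a - 1)) (HF F 1 s).

Definition is_metric_Rplus (D : R -> R -> ER) : Prop :=
  (forall x y, 0 <= x -> 0 <= y -> exists d, D x y = Fin d) /\
  (forall x y, 0 <= x -> 0 <= y -> (D x y = Fin 0 <-> x = y)) /\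
  (forall x y, 0 <= x -> 0 <= y -> D x y = D y x) /\
  (forall x y z, 0 <= x -> 0 <= y -> 0 <= z ->
     er_le (D x z) (er_plus (D x y) (D y z))).

From Stdlib Require Import Reals Lra Psatz ZArith ClassicalEpsilon Classical.
From Coquelicot Require Import Compactness.
Open Scope R_scope.

(* Write [f] for the restriction of [F] to [[0, oo)], finite because [(persp F x 1)^a] is, and
   [d x y = (y f(x/y))^a]; then [d] is homogeneous of degree [a] and [d 0 y = (f(0) y)^a].
   Unfolding [T_a(F)(s) = F(s)] through the lower semicontinuous envelope (a compactness
   argument) gives, for [s > 1], some [th] in [[1, s]] with
   [f^(th, 1) + f^(th, s) <= 2^(1 - 1/a) f(s)]; as [t |-> t^a] is strictly concave, the triangle
   inequality forces [th] to be a metric midpoint of [1] and [s]. By homogeneity all pairs have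
   midpoints, so repeated bisection yields points at every dyadic proportion of a geodesic from
   a small [x] to [1]. Comparing with [d 0 q = (f(0) q)^a] along it, and using that [f] decreases
   on [[0, 1]], gives [d s 1 = f(0)^a (1 - s^a)] on [(0, 1)], i.e. [f(s) = f(0) (1 - s^a)^(1/a)];
   the symmetry [f(s) = s f(1/s)] covers [s > 1]. *)

(** * Real powers *)

Lemma Rdiv_lt_1 x y : 0 < y -> x < y -> x / y < 1.
Proof.
  intros Hy Hxy; apply Rmult_lt_reg_r with y; [exact Hy |].
  unfold Rdiv; rewrite Rmult_assoc, Rinv_l; lra.
Qed.

Lemma rpow_0 p : rpow 0 p = 0.
Proof. unfold rpow; destruct (Req_EM_T 0 0); [reflexivity | congruence]. Qed.

Lemma rpow_exp x p : x <> 0 -> rpow x p = exp (p * ln x).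
Proof. intro Hx; unfold rpow; destruct (Req_EM_T x 0); [congruence | reflexivity]. Qed.

Lemma rpow_ge0 x p : 0 <= rpow x p.
Proof.
  destruct (Req_dec x 0) as [-> | Hx]; [rewrite rpow_0; lra |].
  rewrite rpow_exp by exact Hx; left; apply exp_pos.
Qed.

Lemma rpow_gt0 x p : 0 < x -> 0 < rpow x p.
Proof. intro Hx; rewrite rpow_exp by lra; apply exp_pos. Qed.

Lemma rpow_1 p : rpow 1 p = 1.
Proof. rewrite rpow_exp by lra; rewrite ln_1, Rmult_0_r; apply exp_0. Qed.

Lemma rpow_1_r x : 0 <= x -> rpow x 1 = x.
Proof.
  intro Hx; destruct (Req_dec x 0) as [-> | Hx0]; [apply rpow_0 |].
  rewrite rpow_exp, Rmult_1_l by exact Hx0; apply exp_ln; lra.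
Qed.

Lemma rpow_neg x p : x < 0 -> rpow x p = 1.
Proof.
  intro Hx; rewrite rpow_exp by lra.
  unfold ln; destruct (Rlt_dec 0 x); [exfalso; lra |]; rewrite Rmult_0_r; apply exp_0.
Qed.

Lemma rpow_mult x y p : 0 <= x -> 0 <= y -> rpow (x * y) p = rpow x p * rpow y p.
Proof.
  intros Hx Hy.
  destruct (Req_dec x 0) as [-> | Hx0]; [rewrite Rmult_0_l, rpow_0; lra |].
  destruct (Req_dec y 0) as [-> | Hy0]; [rewrite Rmult_0_r, rpow_0; lra |].
  rewrite !rpow_exp, ln_mult, <- exp_plus by (try apply Rmult_integral_contrapositive; lra).
  f_equal; ring.
Qed.

Lemma rpow_inv x p : 0 < x -> rpow (/ x) p = / rpow x p.
Proof.
  intro Hx; rewrite !rpow_exp, ln_Rinv, <- exp_Ropp by (try apply Rinv_neq_0_compat; lra).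
  f_equal; ring.
Qed.

Lemma rpow_rpow x p q : 0 <= x -> rpow (rpow x p) q = rpow x (p * q).
Proof.
  intro Hx; destruct (Req_dec x 0) as [-> | Hx0]; [rewrite !rpow_0; reflexivity |].
  rewrite (rpow_exp x p), rpow_exp, ln_exp, rpow_exp by (try apply Rgt_not_eq, exp_pos; lra).
  f_equal; ring.
Qed.

Lemma rpow_rpow_inv x a : 0 < a -> 0 <= x -> rpow (rpow x a) (/ a) = x.
Proof.
  intros Ha Hx; rewrite rpow_rpow, Rinv_r by lra; apply rpow_1_r, Hx.
Qed.

Lemma rpow_lt x y p : 0 < p -> 0 <= x < y -> rpow x p < rpow y p.
Proof.
  intros Hp [Hx Hxy]; destruct (Req_dec x 0) as [-> | Hx0].
  - rewrite rpow_0; apply rpow_gt0; lra.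
  - rewrite !rpow_exp by lra; apply exp_increasing, Rmult_lt_compat_l, ln_increasing; lra.
Qed.

Lemma rpow_le x y p : 0 < p -> 0 <= x <= y -> rpow x p <= rpow y p.
Proof.
  intros Hp Hxy; destruct (Req_dec x y) as [-> | Hne]; [lra |].
  left; apply rpow_lt; lra.
Qed.

Lemma rpow_le_inv x y p : 0 < p -> 0 <= x -> 0 <= y -> rpow x p <= rpow y p -> x <= y.
Proof.
  intros Hp Hx Hy Hle; apply Rnot_lt_le; intro Hyx.
  pose proof (rpow_lt y x p Hp (conj Hy Hyx)); lra.
Qed.

Lemma rpow_inj x y p : 0 < p -> 0 <= x -> 0 <= y -> rpow x p = rpow y p -> x = y.
Proof.
  intros Hp Hx Hy E; apply Rle_antisym; apply (rpow_le_inv _ _ p); lra.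
Qed.

Lemma rpow_Rpower_inv x a : 0 < a -> 0 < x -> rpow (Rpower x (/ a)) a = x.
Proof.
  intros Ha Hx; rewrite rpow_exp by (apply Rgt_not_eq, exp_pos).
  change (Rpower (Rpower x (/ a)) a = x).
  rewrite Rpower_mult, Rinv_l by lra; apply Rpower_1, Hx.
Qed.

Lemma ln_lt_pred t : 0 < t -> t <> 1 -> ln t < t - 1.
Proof.
  intros Ht Ht1.
  assert (Hln : ln t <> 0) by (intro E; apply Ht1; rewrite <- (exp_ln t), E by lra; apply exp_0).
  pose proof (exp_ineq1 _ Hln) as H; rewrite exp_ln in H by lra; lra.
Qed.

Lemma ln_le_pred t : 0 < t -> ln t <= t - 1.
Proof.
  intro Ht; destruct (Req_dec t 1) as [-> | Ht1]; [rewrite ln_1; lra |].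
  left; apply ln_lt_pred; assumption.
Qed.

(* Weighted AM-GM in the form [z^a * 1^(1-a) < a z + (1 - a)], proved from [ln t <= t - 1]
   at [t = z / M] and [t = 1 / M] with [M = 1 + a (z - 1)]. *)
Lemma rpow_lt_tangent a z : 0 < a < 1 -> 0 <= z -> z <> 1 -> rpow z a < 1 + a * (z - 1).
Proof.
  intros Ha Hz Hz1; destruct (Req_dec z 0) as [-> | Hz0]; [rewrite rpow_0; nra |].
  set (M := 1 + a * (z - 1)); assert (HM : 0 < M) by (unfold M; nra).
  assert (Hz' : ln (z / M) <= z / M - 1) by (apply ln_le_pred, Rdiv_lt_0_compat; lra).
  assert (H1 : ln (/ M) < / M - 1).
  { apply ln_lt_pred; [apply Rinv_0_lt_compat; lra |].
    intro E; apply Hz1; assert (M = 1) by (rewrite <- (Rinv_inv M), E; field).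
    unfold M in *; nra. }
  unfold Rdiv in Hz'; rewrite ln_mult, ln_Rinv in Hz' by (try apply Rinv_0_lt_compat; lra).
  rewrite ln_Rinv in H1 by lra.
  assert (Hsum : a * (z * / M - 1) + (1 - a) * (/ M - 1) = 0) by (unfold M in *; field; lra).
  rewrite rpow_exp by lra; fold M; rewrite <- (exp_ln M) by lra.
  apply exp_increasing; nra.
Qed.

Lemma rpow_le_tangent a z : 0 < a < 1 -> 0 <= z -> rpow z a <= 1 + a * (z - 1).
Proof.
  intros Ha Hz; destruct (Req_dec z 1) as [-> | Hz1]; [rewrite rpow_1; lra |].
  left; apply rpow_lt_tangent; assumption.
Qed.

Lemma rpow_midpoint_concave a X Y : 0 < a < 1 -> 0 <= X -> 0 <= Y -> X <> Y ->
  rpow X a + rpow Y a < 2 * rpow ((X + Y) / 2) a.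
Proof.
  intros Ha HX HY HXY; set (m := (X + Y) / 2).
  assert (Hm : 0 < m) by (unfold m; lra).
  assert (HX' : 0 <= X / m) by (apply Rmult_le_pos; [lra | apply Rlt_le, Rinv_0_lt_compat; lra]).
  assert (HY' : 0 <= Y / m) by (apply Rmult_le_pos; [lra | apply Rlt_le, Rinv_0_lt_compat; lra]).
  assert (RX : rpow X a = rpow m a * rpow (X / m) a)
    by (rewrite <- rpow_mult by lra; f_equal; field; lra).
  assert (RY : rpow Y a = rpow m a * rpow (Y / m) a)
    by (rewrite <- rpow_mult by lra; f_equal; field; lra).
  assert (HXm : X / m <> 1).
  { intro E; apply HXY.
    assert (X = m) by (rewrite <- (Rmult_1_l m), <- E; field; lra).
    unfold m in *; lra. }
  assert (Hsum : X / m + Y / m = 2) by (unfold m; field; lra).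
  pose proof (rpow_gt0 m a Hm).
  pose proof (rpow_lt_tangent a (X / m) Ha HX' HXm).
  pose proof (rpow_le_tangent a (Y / m) Ha HY').
  assert (rpow (X / m) a + rpow (Y / m) a < 2) by nra.
  rewrite RX, RY; nra.
Qed.

(* The extremal case of the triangle inequality for [t |-> t^a]: with [Z^a <= X^a + Y^a],
   strict concavity leaves no room below [X + Y <= 2^(1 - 1/a) Z] except [X^a = Y^a = Z^a / 2]. *)
Lemma rpow_triangle_extremal a X Y Z : 0 < a < 1 -> 0 <= X -> 0 <= Y -> 0 <= Z ->
  rpow Z a <= rpow X a + rpow Y a -> X + Y <= Z / Rpower 2 (/ a - 1) ->
  rpow X a = rpow Z a / 2 /\ rpow Y a = rpow Z a / 2.
Proof.
  intros Ha HX HY HZ Htri Hsum.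
  assert (Hp : Rpower 2 (/ a - 1) * 2 = Rpower 2 (/ a)).
  { rewrite <- (Rpower_1 2) at 2 by lra; rewrite <- Rpower_plus; f_equal; ring. }
  assert (HP1 : 0 < Rpower 2 (/ a - 1)) by apply exp_pos.
  assert (HP : 0 < Rpower 2 (/ a)) by apply exp_pos.
  assert (Hmid : rpow ((X + Y) / 2) a <= rpow Z a / 2).
  { apply Rle_trans with (rpow (Z * / Rpower 2 (/ a)) a).
    - apply rpow_le; [lra |]; split; [lra |].
      rewrite <- Hp, Rinv_mult; unfold Rdiv in Hsum; nra.
    - rewrite rpow_mult, rpow_inv, rpow_Rpower_inv by (try apply Rlt_le, Rinv_0_lt_compat; lra).
      lra. }
  destruct (Req_dec X Y) as [<- | HXY].
  - replace ((X + X) / 2) with X in Hmid by field; lra.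
  - pose proof (rpow_midpoint_concave a X Y Ha HX HY HXY); lra.
Qed.

Definition rpersp (f : R -> R) (x y : R) : R := y * f (x / y).

Definition pdist (f : R -> R) (a x y : R) : R := rpow (rpersp f x y) a.

(** * Metric entropies *)

(* What the proof uses of the finite part [f] of [F]: [pdist f a x y] is [(persp F x y)^a] for
   [y > 0], and [rpow (x * f 0) a] is the distance between [0] and [x]. *)
Record metric_entropy (f : R -> R) (a : R) : Prop := {
  me_exponent : 0 < a < 1;
  me_nonneg : forall x, 0 <= x -> 0 <= f x;
  me_at_1 : f 1 = 0;
  me_at_0 : 0 < f 0;
  me_reverse : forall s, 0 < s -> f s = s * f (/ s);
  me_antitone : forall x y, 0 <= x -> x <= y -> y <= 1 -> f y <= f x;
  me_triangle : forall x y z, 0 < x -> 0 < y -> 0 < z ->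
    pdist f a x z <= pdist f a x y + pdist f a y z;
  me_triangle_via_0 : forall x y, 0 < x -> 0 < y ->
    pdist f a x y <= rpow (x * f 0) a + rpow (y * f 0) a;
  me_triangle_from_0 : forall x y, 0 < x -> 0 < y ->
    rpow (y * f 0) a <= rpow (x * f 0) a + pdist f a x y;
  me_midpoint_ineq : forall s, 1 < s -> exists th, 1 <= th <= s /\
    rpersp f th 1 + rpersp f th s <= f s / Rpower 2 (/ a - 1) }.

Lemma rpersp_1_r f x : rpersp f x 1 = f x.
Proof. unfold rpersp; rewrite Rdiv_1_r; ring. Qed.

Lemma rpersp_scale f l x y : 0 < l -> 0 < y -> rpersp f (l * x) (l * y) = l * rpersp f x y.
Proof.
  intros Hl Hy; unfold rpersp.
  replace (l * x / (l * y)) with (x / y) by (field; lra); ring.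
Qed.

Lemma rpersp_nonneg f x y : (forall z, 0 <= z -> 0 <= f z) -> 0 <= x -> 0 < y ->
  0 <= rpersp f x y.
Proof.
  intros Hf Hx Hy; apply Rmult_le_pos; [lra |].
  apply Hf, Rmult_le_pos; [lra | apply Rlt_le, Rinv_0_lt_compat, Hy].
Qed.

Lemma pow2_inv_lt eta : 0 < eta -> exists n, / 2 ^ n < eta.
Proof.
  intro He; destruct (archimed_cor1 eta He) as [n [Hn Hn0]]; exists n.
  assert (Hlt : INR n < 2 ^ n).
  { clear; induction n as [| n IH]; [simpl; lra |].
    rewrite S_INR; simpl; pose proof (pow_R1_Rle 2 n ltac:(lra)); lra. }
  apply lt_0_INR in Hn0; apply Rle_lt_trans with (/ INR n); [apply Rinv_le_contravar |]; lra.
Qed.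

Lemma nat_floor T : 0 <= T -> exists k : nat, INR k <= T < INR k + 1.
Proof.
  intro HT; destruct (base_Int_part T) as [H1 H2].
  assert (Hz : (0 <= Int_part T)%Z) by (apply Z.lt_pred_le, lt_IZR; simpl; lra).
  exists (Z.to_nat (Int_part T)); rewrite INR_IZR_INZ, Z2Nat.id by exact Hz; lra.
Qed.

Lemma le_of_le_add_small A B K e0 : 0 <= K -> 0 < e0 ->
  (forall eta, 0 < eta <= e0 -> A <= B + K * eta) -> A <= B.
Proof.
  intros HK He0 H; apply Rnot_lt_le; intro HBA.
  set (eta := Rmin e0 ((A - B) / (2 * (K + 1)))).
  assert (Heta : eta <= (A - B) / (2 * (K + 1))) by apply Rmin_r.
  assert (Heta0 : 0 < eta) by (apply Rmin_pos; [lra | apply Rdiv_lt_0_compat; lra]).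
  specialize (H eta (conj Heta0 (Rmin_l _ _))).
  assert (eta * (2 * (K + 1)) <= A - B).
  { apply Rmult_le_reg_r with (/ (2 * (K + 1))); [apply Rinv_0_lt_compat; lra |].
    rewrite Rmult_assoc, Rinv_r by lra; lra. }
  nra.
Qed.

Section MetricEntropy.
Variables (f : R -> R) (a : R).
Hypothesis Hf : metric_entropy f a.

Let d := pdist f a.

Lemma pdist_sym x y : 0 < x -> 0 < y -> d x y = d y x.
Proof.
  intros Hx Hy; unfold d, pdist, rpersp; f_equal.
  rewrite (me_reverse _ _ Hf (x / y)) by (apply Rdiv_lt_0_compat; lra).
  replace (/ (x / y)) with (y / x) by (field; lra); field; lra.
Qed.

Lemma pdist_self x : 0 < x -> d x x = 0.
Proof.
  intro Hx; unfold d, pdist, rpersp.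
  rewrite Rdiv_diag, (me_at_1 _ _ Hf), Rmult_0_r by lra; apply rpow_0.
Qed.

Lemma pdist_1_r x : d x 1 = rpow (f x) a.
Proof. unfold d, pdist; rewrite rpersp_1_r; reflexivity. Qed.

Lemma pdist_scale l x y : 0 < l -> 0 <= x -> 0 < y -> d (l * x) (l * y) = rpow l a * d x y.
Proof.
  intros Hl Hx Hy; unfold d, pdist; rewrite rpersp_scale by assumption.
  apply rpow_mult; [lra | apply rpersp_nonneg; [apply (me_nonneg _ _ Hf) | lra | lra]].
Qed.

(* For [1 < s] the point [th] of [me_midpoint_ineq] is a metric midpoint of [1] and [s];
   scaling by [u] moves it between [u] and [v = u s]. *)
Lemma pdist_midpoint u v : 0 < u -> u <= v -> exists m, u <= m <= v /\
  d u m = d u v / 2 /\ d m v = d u v / 2.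
Proof.
  intros Hu Huv; destruct (Req_dec u v) as [<- | Hne].
  { exists u; rewrite pdist_self by lra; lra. }
  set (s := v / u).
  assert (Hv : v = u * s) by (unfold s; field; lra).
  assert (Hs : 1 < s) by nra.
  destruct (me_midpoint_ineq _ _ Hf s Hs) as [th [Hth Hle]].
  assert (Hs1 : d 1 s = rpow (f s) a) by (rewrite pdist_sym, pdist_1_r by lra; reflexivity).
  assert (Hth1 : d 1 th = rpow (rpersp f th 1) a) by (rewrite pdist_sym by lra; reflexivity).
  pose proof (me_triangle _ _ Hf 1 th s ltac:(lra) ltac:(lra) ltac:(lra)) as Htri.
  fold d in Htri; rewrite Hs1, Hth1 in Htri.
  destruct (rpow_triangle_extremal a (rpersp f th 1) (rpersp f th s) (f s)) as [E1 E2];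
    try apply rpersp_nonneg; try apply (me_nonneg _ _ Hf); try apply (me_exponent _ _ Hf);
    try assumption; try lra.
  exists (u * th); split; [nra |].
  assert (Dum : d u (u * th) = rpow u a * d 1 th)
    by (rewrite <- pdist_scale by lra; f_equal; ring).
  assert (Duv : d u v = rpow u a * d 1 s)
    by (rewrite Hv, <- pdist_scale by lra; f_equal; ring).
  assert (Dmv : d (u * th) v = rpow u a * d th s) by (rewrite Hv; apply pdist_scale; lra).
  rewrite Dum, Duv, Dmv, Hs1, Hth1, E1; unfold d, pdist; rewrite E2; lra.
Qed.

Definition dyadic_chain x t w := exists q1 q2, x <= q1 <= q2 /\ q2 <= 1 /\
  d x q1 = t * d x 1 /\ d q1 q2 = w * d x 1 /\ d q2 1 = (1 - t - w) * d x 1.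

(* Bisect the middle segment: the triangle inequalities through the midpoint are forced to be
   equalities because the three pieces already add up to [d x 1]. *)
Lemma dyadic_chain_halve x t w : 0 < x -> dyadic_chain x t w ->
  dyadic_chain x t (w / 2) /\ dyadic_chain x (t + w / 2) (w / 2).
Proof.
  intros Hx [q1 [q2 [Hq [Hq2 [E1 [E2 E3]]]]]].
  destruct (pdist_midpoint q1 q2) as [m [Hm [M1 M2]]]; try lra.
  pose proof (me_triangle _ _ Hf x q1 m ltac:(lra) ltac:(lra) ltac:(lra)) as T1.
  pose proof (me_triangle _ _ Hf x m 1 ltac:(lra) ltac:(lra) ltac:(lra)) as T2.
  pose proof (me_triangle _ _ Hf x q1 1 ltac:(lra) ltac:(lra) ltac:(lra)) as T3.
  pose proof (me_triangle _ _ Hf q1 m 1 ltac:(lra) ltac:(lra) ltac:(lra)) as T4.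
  pose proof (me_triangle _ _ Hf m q2 1 ltac:(lra) ltac:(lra) ltac:(lra)) as T5.
  fold d in T1, T2, T3, T4, T5; rewrite E2 in M1, M2.
  split; [exists q1, m | exists m, q2]; repeat split; lra.
Qed.

Lemma dyadic_chain_dyadic x n k : 0 < x <= 1 -> INR k < 2 ^ n ->
  dyadic_chain x (INR k / 2 ^ n) (/ 2 ^ n).
Proof.
  intros Hx; revert k; induction n as [| n IH]; intros k Hk.
  - simpl in Hk; assert (k = 0%nat)
      by (destruct k; [reflexivity |]; rewrite S_INR in Hk; pose proof (pos_INR k); lra).
    subst k; exists x, 1; rewrite !pdist_self by lra; simpl; rewrite Rdiv_1_r, Rinv_1.
    repeat split; lra.
  - assert (H2n : 0 < 2 ^ n) by (apply pow_lt; lra).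
    destruct (Nat.Even_or_Odd k) as [[j ->] | [j ->]].
    + rewrite mult_INR in Hk |- *.
      assert (Hj : INR j < 2 ^ n) by (simpl in Hk; lra).
      destruct (dyadic_chain_halve x _ _ (proj1 Hx) (IH j Hj)) as [H _].
      replace (INR 2 * INR j / 2 ^ S n) with (INR j / 2 ^ n) by (simpl; field; lra).
      replace (/ 2 ^ S n) with (/ 2 ^ n / 2) by (simpl; field; lra); exact H.
    + rewrite plus_INR, mult_INR in Hk |- *.
      assert (Hj : INR j < 2 ^ n) by (simpl in Hk; lra).
      destruct (dyadic_chain_halve x _ _ (proj1 Hx) (IH j Hj)) as [_ H].
      replace ((INR 2 * INR j + INR 1) / 2 ^ S n) with (INR j / 2 ^ n + / 2 ^ n / 2)
        by (simpl; field; lra).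
      replace (/ 2 ^ S n) with (/ 2 ^ n / 2) by (simpl; field; lra); exact H.
Qed.

Lemma geodesic_point x T eta : 0 < x <= 1 -> 0 <= T < 1 -> 0 < eta -> exists q t,
  x <= q <= 1 /\ 0 <= t <= T /\ T - eta < t /\ d x q = t * d x 1 /\ d q 1 <= (1 - t) * d x 1.
Proof.
  intros Hx HT He; destruct (pow2_inv_lt eta He) as [n Hn].
  assert (H2n : 0 < 2 ^ n) by (apply pow_lt; lra).
  destruct (nat_floor (T * 2 ^ n)) as [k [Hk1 Hk2]]; [nra |].
  destruct (dyadic_chain_dyadic x n k Hx ltac:(nra)) as [q1 [q2 [Hq [Hq2 [E1 [E2 E3]]]]]].
  set (t := INR k / 2 ^ n) in *; set (w := / 2 ^ n) in *.
  assert (Hk : INR k = t * 2 ^ n) by (unfold t; field; lra).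
  assert (Hw : w * 2 ^ n = 1) by (unfold w; field; lra).
  pose proof (pos_INR k).
  pose proof (me_triangle _ _ Hf q1 q2 1 ltac:(lra) ltac:(lra) ltac:(lra)) as T1; fold d in T1.
  exists q1, t; repeat split; try lra; nra.
Qed.

(* [x = eta^(1/a)] is so close to [0] that a geodesic from [x] to [1] nearly passes through [0]:
   its point at proportion [t ~ s^a] lies below [s], yet is at distance [~ (1 - t) f(0)^a]
   from [1]. *)
Lemma pdist_to_1_upper s eta : 0 < s < 1 -> 0 < eta -> eta <= rpow s a / 4 -> eta <= 1 / 2 ->
  d s 1 <= rpow (f 0) a * (1 - rpow s a) + 7 * rpow (f 0) a * eta.
Proof.
  intros Hs He Hes He2; pose proof (me_exponent _ _ Hf) as Ha.
  set (c := rpow (f 0) a); assert (Hc : 0 < c) by (apply rpow_gt0, (me_at_0 _ _ Hf)).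
  assert (Hsa : rpow s a < 1) by (rewrite <- (rpow_1 a); apply rpow_lt; lra).
  set (x := rpow eta (/ a)).
  assert (Hxa : rpow x a = eta).
  { unfold x; rewrite rpow_rpow, Rinv_l by lra; apply rpow_1_r; lra. }
  assert (Hx : 0 < x < 1).
  { split; [apply rpow_gt0; lra |].
    unfold x; rewrite <- (rpow_1 (/ a)); apply rpow_lt; [apply Rinv_0_lt_compat |]; lra. }
  assert (Hdist0 : forall y, 0 <= y -> rpow (y * f 0) a = rpow y a * c)
    by (intros y Hy; apply rpow_mult; [lra | apply Rlt_le, (me_at_0 _ _ Hf)]).
  assert (HD : d x 1 <= c * eta + c).
  { pose proof (me_triangle_via_0 _ _ Hf x 1 ltac:(lra) ltac:(lra)) as T1; fold d in T1.
    rewrite !Hdist0, Hxa, rpow_1 in T1 by lra; lra. }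
  destruct (geodesic_point x (rpow s a - 2 * eta) eta) as [q [t [Hq [Ht [Ht' [E1 E2]]]]]];
    try lra.
  assert (Hqs : q <= s).
  { pose proof (me_triangle_from_0 _ _ Hf x q ltac:(lra) ltac:(lra)) as T1; fold d in T1.
    rewrite !Hdist0, Hxa, E1 in T1 by lra.
    apply (rpow_le_inv _ _ a); try lra.
    apply Rmult_le_reg_r with c; [exact Hc |].
    assert (t * d x 1 <= t * (c * eta + c)) by (apply Rmult_le_compat_l; lra).
    assert (t * c <= (rpow s a - 2 * eta) * c) by (apply Rmult_le_compat_r; lra).
    assert (t * (c * eta) <= 1 * (c * eta)) by (apply Rmult_le_compat_r; nra).
    lra. }
  assert (Hmono : d s 1 <= d q 1).
  { rewrite !pdist_1_r; apply rpow_le; [lra |].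
    split; [apply (me_nonneg _ _ Hf); lra | apply (me_antitone _ _ Hf); lra]. }
  assert (HD0 : 0 <= d x 1) by apply rpow_ge0.
  assert ((1 - t) * d x 1 <= (1 - t) * (c * eta + c)) by (apply Rmult_le_compat_l; lra).
  assert ((1 - t) * (c * eta + c) <= (1 - rpow s a + 3 * eta) * (c * eta + c))
    by (apply Rmult_le_compat_r; nra).
  pose proof (rpow_ge0 s a); assert (0 <= c * eta) by nra.
  nra.
Qed.

Lemma pdist_to_1 s : 0 < s < 1 -> d s 1 = rpow (f 0) a * (1 - rpow s a).
Proof.
  intro Hs; pose proof (me_exponent _ _ Hf) as Ha; pose proof (me_at_0 _ _ Hf) as Hf0.
  assert (Hsa : 0 < rpow s a) by (apply rpow_gt0; lra).
  apply Rle_antisym.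
  - apply (le_of_le_add_small _ _ (7 * rpow (f 0) a) (Rmin (rpow s a / 4) (1 / 2))).
    + pose proof (rpow_ge0 (f 0) a); lra.
    + apply Rmin_pos; lra.
    + intros eta [He He'].
      apply pdist_to_1_upper; try lra.
      * apply Rle_trans with (1 := He'), Rmin_l.
      * apply Rle_trans with (1 := He'), Rmin_r.
  - pose proof (me_triangle_from_0 _ _ Hf s 1 ltac:(lra) ltac:(lra)) as T1; fold d in T1.
    rewrite !rpow_mult, rpow_1 in T1 by lra; lra.
Qed.

Lemma f_power_form s : 0 <= s -> f s = f 0 * rpow (Rabs (rpow s a - 1)) (/ a).
Proof.
  intro Hs; pose proof (me_exponent _ _ Hf) as Ha; pose proof (me_at_0 _ _ Hf) as Hf0.
  assert (Hbelow1 : forall u, 0 < u < 1 -> f u = f 0 * rpow (Rabs (rpow u a - 1)) (/ a)).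
  { intros u Hu; pose proof (pdist_to_1 u Hu) as E; rewrite pdist_1_r in E.
    assert (Hua : rpow u a < 1) by (rewrite <- (rpow_1 a); apply rpow_lt; lra).
    rewrite <- (rpow_rpow_inv (f u) a), E, rpow_mult, rpow_rpow_inv
      by (try apply rpow_ge0; try apply (me_nonneg _ _ Hf); lra).
    rewrite Rabs_left by lra; do 2 f_equal; ring. }
  destruct (Rtotal_order s 1) as [Hs1 | [-> | Hs1]].
  - destruct (Req_dec s 0) as [-> | Hs0]; [| apply Hbelow1; lra].
    replace (Rabs (rpow 0 a - 1)) with 1 by (rewrite rpow_0, Rabs_left; lra).
    rewrite rpow_1; ring.
  - rewrite rpow_1, (me_at_1 _ _ Hf), Rminus_diag, Rabs_R0, rpow_0; ring.
  - assert (Hi : 0 < / s < 1)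
      by (split; [apply Rinv_0_lt_compat | rewrite <- Rinv_1; apply Rinv_lt_contravar]; lra).
    assert (Hsa : 1 < rpow s a) by (rewrite <- (rpow_1 a); apply rpow_lt; lra).
    rewrite (me_reverse _ _ Hf s), Hbelow1, rpow_inv by lra.
    replace (/ rpow s a - 1) with (- ((rpow s a - 1) * / rpow s a)) by (field; lra).
    rewrite Rabs_Ropp, !Rabs_pos_eq
      by (try apply Rmult_le_pos; try apply Rlt_le, Rinv_0_lt_compat; lra).
    rewrite rpow_mult, rpow_inv, rpow_rpow_inv by (try apply Rlt_le, Rinv_0_lt_compat; lra).
    field; lra.
Qed.
End MetricEntropy.

(** * Lower semicontinuous envelopes *)

Lemma er_sup_is_lub S : (exists v, S v) -> er_is_lub S (er_sup S).
Proof.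
  intros [v0 Hv0]; unfold er_sup; apply epsilon_spec.
  destruct (classic (S PInf)) as [HP | HP].
  { exists PInf; split; [intros [] _; exact I |].
    intros b Hb; exact (Hb PInf HP). }
  set (E := fun r => S (Fin r)).
  assert (HE : exists r, E r) by (destruct v0 as [r |]; [exists r; exact Hv0 | contradiction]).
  destruct (classic (bound E)) as [Hb | Hb].
  - destruct (completeness E Hb HE) as [m [Hm1 Hm2]]; exists (Fin m); split.
    + intros [r |] Hy; [apply Hm1, Hy | contradiction].
    + intros [B |] HB; [| exact I]; apply Hm2; intros r Hr; exact (HB (Fin r) Hr).
  - exists PInf; split; [intros [] _; exact I |].
    intros [B |] HB; [| exact I]; apply Hb; exists B; intros r Hr; exact (HB (Fin r) Hr).
Qed.

Lemma er_inf_is_glb S L : (exists v, S v) -> (forall v, S v -> er_le (Fin L) v) ->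
  er_is_glb S (er_inf S).
Proof.
  intros [v0 Hv0] HL; unfold er_inf; apply epsilon_spec.
  destruct (classic (exists r, S (Fin r))) as [[r0 Hr0] | HN].
  - set (E := fun r => S (Fin (- r))).
    assert (Hb : bound E) by (exists (- L); intros r Hr; specialize (HL _ Hr); simpl in HL; lra).
    assert (HE : exists r, E r) by (exists (- r0); unfold E; rewrite Ropp_involutive; exact Hr0).
    destruct (completeness E Hb HE) as [m [Hm1 Hm2]]; exists (Fin (- m)); split.
    + intros [r |] Hy; [| exact I].
      assert (E (- r)) by (unfold E; rewrite Ropp_involutive; exact Hy).
      specialize (Hm1 _ H); simpl; lra.
    + intros [B |] HB; [| exact (HB _ Hr0)].
      assert (m <= - B); [apply Hm2; intros r Hr; specialize (HB _ Hr); simpl in HB; lra |].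
      simpl; lra.
  - exists PInf; split; [| intros []; simpl; auto].
    intros [r |] Hy; [exfalso; apply HN; exists r; exact Hy | exact I].
Qed.

Lemma le_lsc_env G g x1 x2 : lsc2_on g ->
  (forall y1 y2, 0 <= y1 -> 0 <= y2 -> er_le (g y1 y2) (G y1 y2)) ->
  er_le (g x1 x2) (lsc_env G x1 x2).
Proof.
  intros Hg HgG; unfold lsc_env.
  match goal with |- context [er_sup ?S] => set (S0 := S) end.
  assert (HS : S0 (g x1 x2)) by (exists g; auto).
  exact (proj1 (er_sup_is_lub S0 (ex_intro _ _ HS)) _ HS).
Qed.

Definition box_step (x1 x2 r v w y1 y2 : R) : ER :=
  if Rlt_dec (Rmax (Rabs (y1 - x1)) (Rabs (y2 - x2))) r then Fin v else Fin w.

Lemma box_step_lsc x1 x2 r v w : w <= v -> lsc2_on (box_step x1 x2 r v w).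
Proof.
  intros Hwv z1 z2 c _ _; unfold box_step at 1.
  destruct (Rlt_dec _ r) as [Hin | Hout]; simpl; intro Hc.
  - exists (r - Rmax (Rabs (z1 - x1)) (Rabs (z2 - x2))); split; [lra |].
    intros y1 y2 _ _ H1 H2; unfold box_step.
    destruct (Rlt_dec _ r) as [| Hy]; [exact Hc | exfalso; apply Hy].
    pose proof (Rabs_triang (y1 - z1) (z1 - x1)); pose proof (Rabs_triang (y2 - z2) (z2 - x2)).
    pose proof (Rmax_l (Rabs (z1 - x1)) (Rabs (z2 - x2))).
    pose proof (Rmax_r (Rabs (z1 - x1)) (Rabs (z2 - x2))).
    replace (y1 - x1) with (y1 - z1 + (z1 - x1)) by ring.
    replace (y2 - x2) with (y2 - z2 + (z2 - x2)) by ring.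
    apply Rmax_lub_lt; lra.
  - exists 1; split; [lra |]; intros y1 y2 _ _ _ _; unfold box_step.
    destruct (Rlt_dec _ r); simpl; lra.
Qed.

Lemma div_continuous th0 y0 e : 0 < y0 -> 0 < e -> exists rho, 0 < rho /\
  forall th y, Rabs (th - th0) < rho -> Rabs (y - y0) < rho -> Rabs (th / y - th0 / y0) < e.
Proof.
  intros Hy0 He; set (M := y0 + Rabs th0).
  assert (HM : 0 < M) by (unfold M; pose proof (Rabs_pos th0); lra).
  exists (Rmin (y0 / 2) (e * (y0 * y0) / (2 * M))).
  split; [apply Rmin_pos; [lra | apply Rdiv_lt_0_compat; [apply Rmult_lt_0_compat |]]; nra |].
  intros th y H1 H2; set (rho := Rmin _ _) in H1, H2.
  assert (Hr1 : rho <= y0 / 2) by apply Rmin_l.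
  assert (Hr2 : rho * (2 * M) <= e * (y0 * y0)).
  { apply Rle_trans with (e * (y0 * y0) / (2 * M) * (2 * M)); [| right; field; lra].
    apply Rmult_le_compat_r; [lra | apply Rmin_r]. }
  pose proof (Rabs_def2 _ _ H2); pose proof (Rabs_pos th0); pose proof (Rabs_pos (th - th0)).
  assert (Hnum : Rabs ((th - th0) * y0 + th0 * (y0 - y)) <= rho * M).
  { eapply Rle_trans; [apply Rabs_triang |].
    rewrite !Rabs_mult, (Rabs_pos_eq y0), (Rabs_minus_sym y0) by lra; unfold M; nra. }
  replace (th / y - th0 / y0) with (((th - th0) * y0 + th0 * (y0 - y)) * / (y * y0))
    by (field; lra).
  rewrite Rabs_mult, Rabs_inv, (Rabs_pos_eq (y * y0)) by nra.
  apply Rmult_lt_reg_r with (y * y0); [nra |].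
  rewrite Rmult_assoc, Rinv_l, Rmult_1_r by nra.
  assert (0 < e * y0 * (y - y0 / 2)) by (apply Rmult_lt_0_compat; [nra | lra]).
  nra.
Qed.

Definition lsc_real_on_Rplus (f : R -> R) : Prop :=
  forall x c, 0 <= x -> c < f x ->
    exists r, 0 < r /\ forall y, 0 <= y -> Rabs (y - x) < r -> c < f y.

Lemma rpersp_lsc f : (forall x, 0 <= x -> 0 <= f x) -> lsc_real_on_Rplus f ->
  forall th0 y0 eps, 0 < th0 -> 0 < y0 -> 0 < eps -> exists rho, 0 < rho /\
  forall th y, 0 <= th -> Rabs (th - th0) < rho -> Rabs (y - y0) < rho ->
    rpersp f th0 y0 - eps < rpersp f th y.
Proof.
  intros Hnn Hlsc th0 y0 eps Hth0 Hy0 He.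
  set (z0 := th0 / y0); assert (Hz0 : 0 <= f z0) by (apply Hnn, Rlt_le, Rdiv_lt_0_compat; lra).
  set (e1 := eps / (4 * (y0 + 1))).
  assert (He1 : 0 < e1) by (apply Rdiv_lt_0_compat; lra).
  assert (He1' : e1 * (4 * (y0 + 1)) = eps) by (unfold e1; field; lra).
  destruct (Hlsc z0 (f z0 - e1)) as [r1 [Hr1 Hf1]]; [apply Rlt_le, Rdiv_lt_0_compat; lra | lra |].
  destruct (div_continuous th0 y0 r1 Hy0 Hr1) as [r2 [Hr2 Hdiv]].
  set (r3 := eps / (2 * (f z0 + 1))).
  assert (Hr3 : 0 < r3) by (apply Rdiv_lt_0_compat; lra).
  assert (Hr3' : r3 * (2 * (f z0 + 1)) = eps) by (unfold r3; field; lra).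
  exists (Rmin r2 (Rmin (y0 / 2) r3)); split; [repeat apply Rmin_pos; lra |].
  intros th y Hth H1 H2.
  pose proof (Rmin_l r2 (Rmin (y0 / 2) r3)); pose proof (Rmin_r r2 (Rmin (y0 / 2) r3)).
  pose proof (Rmin_l (y0 / 2) r3); pose proof (Rmin_r (y0 / 2) r3).
  pose proof (Rabs_def2 _ _ H2).
  assert (Hy : y0 / 2 < y <= 2 * y0) by lra.
  assert (Hq : f z0 - e1 < f (th / y)).
  { apply Hf1; [apply Rmult_le_pos; [lra | apply Rlt_le, Rinv_0_lt_compat; lra] |].
    apply Hdiv; lra. }
  unfold rpersp; fold z0.
  assert (y * (f (th / y) - f z0) >= - (2 * y0) * e1) by nra.
  assert ((y - y0) * f z0 >= - r3 * f z0) by nra.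
  nra.
Qed.

Lemma compact_uniform_margin lo hi h (U : Type) (nrm : U -> R) (G : R -> U -> R) :
  (forall th, lo <= th <= hi -> exists r, 0 < r /\
     forall th' u, Rabs (th' - th) < r -> nrm u < r -> h + r < G th' u) ->
  exists dlt, 0 < dlt /\ forall th u, lo <= th <= hi -> nrm u < dlt -> h + dlt < G th u.
Proof.
  intro Hloc.
  set (P := fun th r => 0 < r /\ (lo <= th <= hi ->
    forall th' u, Rabs (th' - th) < r -> nrm u < r -> h + r < G th' u)).
  assert (HP : forall th, P th (epsilon (inhabits 1) (P th))).
  { intro th; apply epsilon_spec.
    destruct (classic (lo <= th <= hi)) as [Hin | Hout].
    - destruct (Hloc th Hin) as [r [Hr Hr']]; exists r; split; auto.
    - exists 1; split; [lra | contradiction]. }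
  destruct (compactness_value_1d lo hi
              (fun th => mkposreal _ (proj1 (HP th)))) as [[dlt Hdlt] Hcov].
  exists dlt; split; [exact Hdlt |]; intros th u Hth Hu.
  apply NNPP; intro Hc; apply (Hcov th Hth); intros [t [Ht [Htt Hdt]]]; simpl in Htt, Hdt.
  apply Hc; specialize (proj2 (HP t) Ht th u Htt ltac:(lra)); lra.
Qed.

Section PerspectiveInfimum.
Variables (F : R -> ER) (f : R -> R).
Hypothesis HFin : forall x, 0 <= x -> F x = Fin (f x).
Hypothesis Hnn : forall x, 0 <= x -> 0 <= f x.
Hypothesis Hlsc : lsc_real_on_Rplus f.
Hypothesis Hanti : forall x y, 0 <= x -> x <= y -> y <= 1 -> f y <= f x.
Hypothesis Hmono : forall x y, 1 <= x -> x <= y -> f x <= f y.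

Lemma persp_pos x y : 0 <= x -> 0 < y -> persp F x y = Fin (rpersp f x y).
Proof.
  intros Hx Hy; unfold persp; destruct (Rlt_dec 0 y) as [_ | ]; [| lra].
  rewrite HFin; [reflexivity | apply Rmult_le_pos; [lra | apply Rlt_le, Rinv_0_lt_compat, Hy]].
Qed.

Lemma rpersp_antitone th th' y : 0 < th -> th <= th' -> th' <= y ->
  rpersp f th' y <= rpersp f th y.
Proof.
  intros H1 H2 H3; unfold rpersp; apply Rmult_le_compat_l; [lra |].
  assert (Hy : 0 < / y) by (apply Rinv_0_lt_compat; lra).
  apply Hanti; unfold Rdiv; try nra.
  rewrite <- (Rinv_r y) by lra; nra.
Qed.

Lemma rpersp_monotone th th' y : 0 < y -> y <= th' -> th' <= th ->
  rpersp f th' y <= rpersp f th y.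
Proof.
  intros H1 H2 H3; unfold rpersp; apply Rmult_le_compat_l; [lra |].
  assert (Hy : 0 < / y) by (apply Rinv_0_lt_compat; lra).
  apply Hmono; unfold Rdiv; try nra.
  rewrite <- (Rinv_r y) by lra; nra.
Qed.

Let Phi th y1 y2 := rpersp f th y1 + rpersp f th y2.

Lemma Phi_ge_clamp lo hi th y1 y2 : 0 < lo -> lo <= y1 <= hi -> lo <= y2 <= hi -> 0 < th ->
  exists th0, lo <= th0 <= hi /\ Phi th0 y1 y2 <= Phi th y1 y2.
Proof.
  intros Hlo Hy1 Hy2 Hth; unfold Phi.
  destruct (Rlt_dec th lo) as [B1 | B1]; [| destruct (Rlt_dec hi th) as [B2 | B2]].
  - exists lo; pose proof (rpersp_antitone th lo y1); pose proof (rpersp_antitone th lo y2).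
    split; lra.
  - exists hi; pose proof (rpersp_monotone th hi y1); pose proof (rpersp_monotone th hi y2).
    split; lra.
  - exists th; split; lra.
Qed.

Lemma Phi_local_margin s h th : 1 < s -> 1 / 2 <= th -> h < Phi th 1 s ->
  exists r, 0 < r /\ forall th' u, Rabs (th' - th) < r ->
    Rmax (Rabs (fst u - 1)) (Rabs (snd u - s)) < r -> h + r < Phi th' (fst u) (snd u).
Proof.
  intros Hs Hth Hh; set (e := (Phi th 1 s - h) / 2).
  assert (He : 0 < e) by (unfold e; lra).
  destruct (rpersp_lsc f Hnn Hlsc th 1 (e / 2)) as [r1 [Hr1 P1]]; try lra.
  destruct (rpersp_lsc f Hnn Hlsc th s (e / 2)) as [r2 [Hr2 P2]]; try lra.
  exists (Rmin (Rmin r1 r2) (Rmin e (1 / 4))); split; [repeat apply Rmin_pos; lra |].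
  intros th' [y1 y2] Hth' Hu; simpl in Hu |- *.
  pose proof (Rmin_l (Rmin r1 r2) (Rmin e (1 / 4))); pose proof (Rmin_l r1 r2).
  pose proof (Rmin_r (Rmin r1 r2) (Rmin e (1 / 4))); pose proof (Rmin_r r1 r2).
  pose proof (Rmin_l e (1 / 4)); pose proof (Rmin_r e (1 / 4)).
  pose proof (Rmax_l (Rabs (y1 - 1)) (Rabs (y2 - s))).
  pose proof (Rmax_r (Rabs (y1 - 1)) (Rabs (y2 - s))).
  pose proof (Rabs_def2 _ _ Hth').
  specialize (P1 th' y1 ltac:(lra) ltac:(lra) ltac:(lra)).
  specialize (P2 th' y2 ltac:(lra) ltac:(lra) ltac:(lra)).
  assert (Phi th 1 s = h + 2 * e) by (unfold e; lra); unfold Phi in *; lra.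
Qed.

(* Compactness of [[1/2, s+1]] makes the local margins uniform; outside this range the
   monotonicity of the perspective in [th] takes over. *)
Lemma Phi_margin s h : 1 < s -> (forall th, 1 <= th <= s -> h < Phi th 1 s) ->
  exists dlt, 0 < dlt <= 1 / 4 /\ forall th y1 y2, 0 < th ->
    Rabs (y1 - 1) < dlt -> Rabs (y2 - s) < dlt -> h + dlt < Phi th y1 y2.
Proof.
  intros Hs Hno.
  destruct (compact_uniform_margin (1 / 2) (s + 1) h (R * R)
              (fun u => Rmax (Rabs (fst u - 1)) (Rabs (snd u - s)))
              (fun th u => Phi th (fst u) (snd u))) as [dlt [Hd Hunif]].
  { intros th Hth; apply Phi_local_margin; try lra.
    destruct (Phi_ge_clamp 1 s th 1 s) as [th0 [Hth0 Hle]]; try lra.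
    specialize (Hno th0 Hth0); lra. }
  exists (Rmin dlt (1 / 4)); pose proof (Rmin_l dlt (1 / 4)); pose proof (Rmin_r dlt (1 / 4)).
  split; [split; [apply Rmin_pos |]; lra |].
  intros th y1 y2 Hth H1 H2; pose proof (Rabs_def2 _ _ H1); pose proof (Rabs_def2 _ _ H2).
  destruct (Phi_ge_clamp (1 / 2) (s + 1) th y1 y2) as [th0 [Hth0 Hle]]; try lra.
  specialize (Hunif th0 (y1, y2) Hth0); simpl in Hunif.
  assert (h + dlt < Phi th0 y1 y2) by (apply Hunif, Rmax_lub_lt; lra); lra.
Qed.

Lemma tildeH_ge_box_step s v dlt L : 1 < s -> 0 < dlt <= 1 / 4 ->
  (forall th r, 0 < th -> 0 <= r -> er_le (Fin L) (persp F th r)) ->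
  (forall th y1 y2, 0 < th -> Rabs (y1 - 1) < dlt -> Rabs (y2 - s) < dlt -> v <= Phi th y1 y2) ->
  forall y1 y2, 0 <= y1 -> 0 <= y2 -> er_le (box_step 1 s dlt v (2 * L) y1 y2) (tildeH F y1 y2).
Proof.
  intros Hs Hd Hlow Hbox y1 y2 Hy1 Hy2; unfold tildeH.
  match goal with |- context [er_inf ?S] => set (S0 := S) end.
  assert (HL : forall w, S0 w -> er_le (Fin (2 * L)) w).
  { intros w [th [Hth ->]].
    pose proof (Hlow th y1 Hth Hy1); pose proof (Hlow th y2 Hth Hy2).
    destruct (persp F th y1), (persp F th y2); simpl in *; lra. }
  destruct (er_inf_is_glb S0 (2 * L)) as [_ Hglb]; [| exact HL |].
  { exists (er_plus (persp F 1 y1) (persp F 1 y2)), 1; split; [lra | reflexivity]. }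
  apply Hglb; unfold box_step; destruct (Rlt_dec _ dlt) as [Hin | _]; [| exact HL].
  intros w [th [Hth ->]].
  pose proof (Rmax_l (Rabs (y1 - 1)) (Rabs (y2 - s))).
  pose proof (Rmax_r (Rabs (y1 - 1)) (Rabs (y2 - s))).
  pose proof (Rabs_def2 (y1 - 1) dlt ltac:(lra)); pose proof (Rabs_def2 (y2 - s) dlt ltac:(lra)).
  rewrite !persp_pos by lra; apply (Hbox th); lra.
Qed.

(* If [H_F(1, s) = h] were smaller than every [f^(th, 1) + f^(th, s)], the margin of
   [Phi_margin] would give a lower semicontinuous minorant of [tildeH F] exceeding [h]
   at [(1, s)]. *)
Lemma HF_midpoint s h L : 1 < s -> 0 <= h -> L <= 0 ->
  (forall th r, 0 < th -> 0 <= r -> er_le (Fin L) (persp F th r)) ->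
  HF F 1 s = Fin h -> exists th, 1 <= th <= s /\ rpersp f th 1 + rpersp f th s <= h.
Proof.
  intros Hs Hh HL Hlow HHF; apply NNPP; intro Hno.
  destruct (Phi_margin s h Hs) as [dlt [Hd Hmargin]].
  { intros th Hth; apply Rnot_le_lt; intro Hle; apply Hno; exists th; auto. }
  pose proof (le_lsc_env (tildeH F) (box_step 1 s dlt (h + dlt) (2 * L)) 1 s
    (box_step_lsc 1 s dlt (h + dlt) (2 * L) ltac:(lra))
    (tildeH_ge_box_step s (h + dlt) dlt L Hs Hd Hlow
       (fun th y1 y2 Hth H1 H2 => Rlt_le _ _ (Hmargin th y1 y2 Hth H1 H2)))) as Hge.
  change (lsc_env (tildeH F) 1 s) with (HF F 1 s) in Hge; rewrite HHF in Hge.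
  unfold box_step in Hge; rewrite !Rminus_diag, Rabs_R0, Rmax_left in Hge by lra.
  destruct (Rlt_dec 0 dlt); simpl in Hge; lra.
Qed.
End PerspectiveInfimum.

(** * The finite part of a fixed point of [T_a] *)

Section ConvexProfile.
Variable f : R -> R.
Hypothesis Hconv : forall x y l, 0 <= x -> 0 <= y -> 0 < l < 1 ->
  f (l * x + (1 - l) * y) <= l * f x + (1 - l) * f y.
Hypothesis Hnn : forall x, 0 <= x -> 0 <= f x.
Hypothesis Hf1 : f 1 = 0.

Lemma convex_antitone_below_1 x y : 0 <= x -> x <= y -> y <= 1 -> f y <= f x.
Proof.
  intros Hx Hxy Hy1.
  destruct (Req_dec y 1) as [-> | Hy1']; [rewrite Hf1; apply Hnn, Hx |].
  destruct (Req_dec x y) as [-> | Hxy']; [lra |].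
  set (l := (y - x) / (1 - x)).
  assert (Hl : 0 < l < 1) by (unfold l; split; [apply Rdiv_lt_0_compat | apply Rdiv_lt_1]; lra).
  pose proof (Hconv 1 x l ltac:(lra) Hx Hl) as H.
  replace (l * 1 + (1 - l) * x) with y in H by (unfold l; field; lra).
  rewrite Hf1 in H; pose proof (Hnn x Hx); nra.
Qed.

Lemma convex_monotone_above_1 x y : 1 <= x -> x <= y -> f x <= f y.
Proof.
  intros Hx Hxy.
  destruct (Req_dec x 1) as [-> | Hx1]; [rewrite Hf1; apply Hnn; lra |].
  destruct (Req_dec x y) as [-> | Hxy']; [lra |].
  set (l := (y - x) / (y - 1)).
  assert (Hl : 0 < l < 1) by (unfold l; split; [apply Rdiv_lt_0_compat | apply Rdiv_lt_1]; lra).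
  pose proof (Hconv 1 y l ltac:(lra) ltac:(lra) Hl) as H.
  replace (l * 1 + (1 - l) * y) with x in H by (unfold l; field; lra).
  rewrite Hf1 in H; pose proof (Hnn y ltac:(lra)); nra.
Qed.
End ConvexProfile.

Definition finite_part (x : ER) : R := match x with Fin v => v | PInf => 0 end.

Section FixedPoint.
Variables (F : R -> ER) (a : R).
Hypothesis HG : Gamma0s F.
Hypothesis Ha : 0 < a < 1.
Hypothesis Hmet : is_metric_Rplus (fun x y => er_pow (persp F x y) a).
Hypothesis Hfix : forall s, 0 <= s -> Ta a F s = F s.

Let f x := finite_part (F x).

Lemma F_finite x : 0 <= x -> F x = Fin (f x).
Proof.
  intro Hx; destruct (proj1 Hmet x 1 Hx ltac:(lra)) as [v Hv].
  unfold persp in Hv; destruct (Rlt_dec 0 1) as [_ |]; [| lra].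
  rewrite Rdiv_1_r in Hv; unfold f; destruct (F x); [reflexivity | discriminate].
Qed.

Lemma f_nonneg x : 0 <= x -> 0 <= f x.
Proof.
  intro Hx; destruct HG as [[Hnn _] _]; specialize (Hnn x Hx).
  rewrite F_finite in Hnn by exact Hx; exact Hnn.
Qed.

Lemma f_at_1 : f 1 = 0.
Proof. destruct HG as [[_ [_ [_ H1]]] _]; unfold f; rewrite H1; reflexivity. Qed.

Lemma f_reverse s : 0 < s -> f s = s * f (/ s).
Proof.
  intro Hs; destruct HG as [_ Hrev]; specialize (Hrev s ltac:(lra)).
  unfold revF in Hrev; destruct (Rlt_dec 0 s) as [_ |]; [| lra].
  rewrite !F_finite in Hrev by (try apply Rlt_le, Rinv_0_lt_compat; lra).
  injection Hrev as ->; reflexivity.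
Qed.

Lemma f_convex x y l : 0 <= x -> 0 <= y -> 0 < l < 1 ->
  f (l * x + (1 - l) * y) <= l * f x + (1 - l) * f y.
Proof.
  intros Hx Hy Hl; destruct HG as [[_ [Hconv _]] _]; specialize (Hconv x y l Hx Hy Hl).
  rewrite !F_finite in Hconv by nra; exact Hconv.
Qed.

Lemma f_lsc : lsc_real_on_Rplus f.
Proof.
  intros x c Hx Hc; destruct HG as [[_ [_ [Hlsc _]]] _].
  destruct (Hlsc x c Hx) as [r [Hr Hr']]; [rewrite F_finite by exact Hx; exact Hc |].
  exists r; split; [exact Hr |]; intros y Hy Hyx.
  specialize (Hr' y Hy Hyx); rewrite F_finite in Hr' by exact Hy; exact Hr'.
Qed.

Lemma dist_pos x y : 0 <= x -> 0 < y -> er_pow (persp F x y) a = Fin (pdist f a x y).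
Proof.
  intros Hx Hy; rewrite (persp_pos F f F_finite) by assumption; reflexivity.
Qed.

Lemma dist_from_0 y : 0 < y -> er_pow (persp F 0 y) a = Fin (rpow (y * f 0) a).
Proof.
  intro Hy; rewrite dist_pos by lra; unfold pdist, rpersp; rewrite Rdiv_0_l; reflexivity.
Qed.

Lemma f_at_0_pos : 0 < f 0.
Proof.
  destruct (Rle_lt_or_eq_dec 0 (f 0) (f_nonneg 0 ltac:(lra))) as [| E]; [assumption |].
  exfalso; assert (H01 : 0 = 1); [| lra].
  apply (proj1 (proj2 Hmet) 0 1); try lra.
  rewrite dist_from_0, <- E, Rmult_0_r, rpow_0 by lra; reflexivity.
Qed.

(* Symmetry of the metric pins down the recession values [persp F th 0] up to the junk value
   [rpow q a = 1] for [q < 0], which can only match [d(0, th) = (th f(0))^a] when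
   [th f(0) = 1]. *)
Lemma persp_at_0 th : 0 < th -> exists q, persp F th 0 = Fin q /\ (0 <= q \/ th * f 0 = 1).
Proof.
  intro Hth; destruct (proj1 Hmet th 0 ltac:(lra) ltac:(lra)) as [d Hd].
  destruct (persp F th 0) as [q |] eqn:Eq; [| discriminate].
  exists q; split; [reflexivity |].
  destruct (Rle_dec 0 q) as [Hq | Hq]; [left; exact Hq | right].
  pose proof (proj1 (proj2 (proj2 Hmet)) th 0 ltac:(lra) ltac:(lra)) as Hsym; simpl in Hsym.
  rewrite Eq, dist_from_0 in Hsym by exact Hth; injection Hsym as Hsym.
  rewrite rpow_neg, <- (rpow_1 a) in Hsym by lra.
  pose proof f_at_0_pos; apply rpow_inj in Hsym; nra.
Qed.

(* [er_inf] has a greatest lower bound only on sets bounded below (there is no [-oo]), so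
   [tildeH F] needs this bound. *)
Lemma persp_lower_bound : exists L, L <= 0 /\
  forall th r, 0 < th -> 0 <= r -> er_le (Fin L) (persp F th r).
Proof.
  pose proof f_at_0_pos as Hf0.
  destruct (persp_at_0 (/ f 0)) as [q0 [Hq0 _]]; [apply Rinv_0_lt_compat, Hf0 |].
  exists (Rmin 0 q0); split; [apply Rmin_l |]; intros th r Hth Hr.
  destruct (Req_dec r 0) as [-> | Hr0].
  - destruct (persp_at_0 th Hth) as [q [Eq [Hq | Hq]]]; rewrite Eq; simpl.
    + pose proof (Rmin_l 0 q0); lra.
    + assert (th = / f 0) as -> by (field_simplify_eq; lra).
      rewrite Hq0 in Eq; injection Eq as <-; apply Rmin_r.
  - rewrite (persp_pos F f F_finite) by lra; simpl.
    pose proof (Rmin_l 0 q0); pose proof (rpersp_nonneg f th r f_nonneg ltac:(lra) ltac:(lra)).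
    lra.
Qed.

Lemma f_midpoint_ineq s : 1 < s -> exists th, 1 <= th <= s /\
  rpersp f th 1 + rpersp f th s <= f s / Rpower 2 (/ a - 1).
Proof.
  intro Hs; pose proof (Hfix s ltac:(lra)) as Hs'; unfold Ta in Hs'.
  rewrite F_finite in Hs' by lra.
  assert (HP : 0 < Rpower 2 (/ a - 1)) by apply exp_pos.
  destruct (HF F 1 s) as [v |] eqn:Hv; [| discriminate]; injection Hs' as Hs'.
  replace (f s / Rpower 2 (/ a - 1)) with v by (rewrite <- Hs'; field; lra).
  destruct persp_lower_bound as [L [HL Hlow]].
  apply (HF_midpoint F f F_finite f_nonneg f_lsc) with L; try assumption.
  - exact (convex_antitone_below_1 f f_convex f_nonneg f_at_1).
  - exact (convex_monotone_above_1 f f_convex f_nonneg f_at_1).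
  - apply Rmult_le_reg_l with (Rpower 2 (/ a - 1)); [exact HP |].
    rewrite Hs', Rmult_0_r; apply f_nonneg; lra.
Qed.

Lemma metric_entropy_finite_part : metric_entropy f a.
Proof.
  destruct Hmet as [_ [_ [Hsym Hdist]]]; cbv beta in Hsym, Hdist.
  constructor.
  - exact Ha.
  - exact f_nonneg.
  - exact f_at_1.
  - exact f_at_0_pos.
  - exact f_reverse.
  - exact (convex_antitone_below_1 f f_convex f_nonneg f_at_1).
  - intros x y z Hx Hy Hz; specialize (Hdist x y z ltac:(lra) ltac:(lra) ltac:(lra)).
    rewrite !dist_pos in Hdist by lra; exact Hdist.
  - intros x y Hx Hy; specialize (Hdist x 0 y ltac:(lra) ltac:(lra) ltac:(lra)).
    rewrite (Hsym x 0), dist_pos, !dist_from_0 in Hdist by lra; exact Hdist.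
  - intros x y Hx Hy; specialize (Hdist 0 x y ltac:(lra) ltac:(lra) ltac:(lra)).
    rewrite !dist_from_0, dist_pos in Hdist by lra; exact Hdist.
  - exact f_midpoint_ineq.
Qed.
End FixedPoint.

Theorem mainTheorem7 (F : R -> ER) (a : R) :
  Gamma0s F -> 0 < a < 1 ->
  is_metric_Rplus (fun x y => er_pow (persp F x y) a) ->
  (forall s, 0 <= s -> Ta a F s = F s) ->
  exists c, 0 < c /\
    forall s, 0 <= s -> F s = Fin (c * rpow (Rabs (rpow s a - 1)) (/ a)).
Proof.
  intros HG Ha Hmet Hfix.
  pose proof (metric_entropy_finite_part F a HG Ha Hmet Hfix) as Hf.
  exists (finite_part (F 0)); split; [exact (me_at_0 _ _ Hf) |].
  intros s Hs; rewrite (F_finite F a Hmet s Hs); f_equal.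
  exact (f_power_form _ _ Hf s Hs).
Qed.
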